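(* Let $\mathcal M$ be a valid catalytic machine, $x$ an input and $\tau$ an initial catalytic tape, and let $\langle\pi,u\rangle$ be any vertex of $\mathcal G_{\mathcal M,x,\tau}$. Then $\langle\pi,u\rangle\in V(\mathcal G^0_{\mathcal M,x}(\mathrm{acc}_\tau))\cup V(\mathcal G^0_{\mathcal M,x}(\mathrm{rej}_\tau))$.
   Context: A catalytic machine with work space $s$ and catalytic space $c$ has a read-only input tape holding $x$, a work tape of length $s$ initialized to $0^s$, a catalytic tape of length $c$ initialized to arbitrary $\tau$; non-deterministic/randomized machines have at each step a 0-choice and a 1-choice of transition (deterministic transitions count as both). It is valid if for every $x,\tau$ and every sequence of choices it halts in finite time with catalytic tape $\tau$. All auxiliary configuration information (state, head positions) is recorded on the work tape, so configurations are pairs $\langle\pi,u\rangle$ ($\pi\in\{0,1\}^c$ catalytic content, $u\in\{0,1\}^s$ work content); the start configuration is $\langle\tau,0^s\rangle$, the unique accepting halt configuration is $\mathrm{acc}_\tau=\langle\tau,1\,1\,0^{s-2}\rangle$ and the unique rejecting halt configuration is $\mathrm{rej}_\tau=\langle\tau,1\,0\,0^{s-2}\rangle$. The configuration graph $\mathcal G_{\mathcal M,x}$ has configurations as vertices and a directed edge $v\to v'$ when $v'$ is reachable from $v$ in one step, labeled by the choice bit(s). $\mathcal G_{\mathcal M,x,\tau}$ is the subgraph induced on configurations reachable from $\langle\tau,0^s\rangle$. The $0$-graph $\mathcal G^0_{\mathcal M,x}$ is the undirected graph retaining only edges labeled $0$ with directions forgotten, and $\mathcal G^0_{\mathcal M,x}(v)$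 is the connected component containing $v$. *)

From mathcomp Require Import all_boot.
Set Implicit Arguments. Unset Strict Implicit. Unset Printing Implicit Defensive.

Definition ctape (c : nat) := {ffun 'I_c -> bool}.
Definition wtape (s : nat) := {ffun 'I_s -> bool}.

(* A configuration <pi, u>; all auxiliary info (state, heads) lives in u. *)
Definition config (c s : nat) := (ctape c * wtape s)%type.

Definition zero_work (s : nat) : wtape s := [ffun _ => false].
Definition halt_work (s : nat) (b : bool) : wtape s :=
  [ffun i : 'I_s => if val i == 0 then true else if val i == 1 then b else false].

Definition start_cfg c s (tau : ctape c) : config c s := (tau, zero_work s).
Definition acc_cfg c s (tau : ctape c) : config c s := (tau, halt_work s true).
Definition rej_cfg c s (tau : ctape c) : config c s := (tau, halt_work s false).

Definition halting c s (v : config c s) : bool :=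
  (v.2 == halt_work s true) || (v.2 == halt_work s false).

(* A (nondeterministic/randomized) catalytic machine with work space s and
   catalytic space c: on input x, from a non-halting configuration v,
   choice bit b leads to configuration  M x v b  (a deterministic transition
   is one where M x v true = M x v false). *)
Definition machine (c s : nat) := seq bool -> config c s -> bool -> config c s.

Fixpoint run c s (M : machine c s) (x : seq bool) (v : config c s)
    (f : nat -> bool) (n : nat) : config c s :=
  match n with
  | 0 => v
  | n'.+1 => let w := run M x v f n' in
             if halting w then w else M x w (f n')
  end.

Definition valid c s (M : machine c s) : Prop :=
  forall (x : seq bool) (tau : ctape c) (f : nat -> bool),
    exists n, halting (run M x (start_cfg s tau) f n) /\
              (run M x (start_cfg s tau) f n).1 = tau.

(* Vertices of G_{M,x,tau}: configurations reachable from <tau,0^s>. *)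
Definition reachable c s (M : machine c s) x (tau : ctape c) (v : config c s)
  : Prop := exists (f : nat -> bool) (n : nat), run M x (start_cfg s tau) f n = v.

Definition edge0 c s (M : machine c s) x : rel (config c s) :=
  fun v w => ~~ halting v && (M x v false == w).

(* The 0-graph G^0_{M,x}: 0-labeled edges with directions forgotten. *)
Definition graph0 c s (M : machine c s) x : rel (config c s) :=
  fun v w => edge0 M x v w || edge0 M x w v.

Definition comp0 c s (M : machine c s) x (v : config c s) : pred (config c s) :=
  fun w => connect (graph0 M x) v w.

From mathcomp Require Import all_boot.

Set Implicit Arguments.
Unset Strict Implicit.
Unset Printing Implicit Defensive.

(* From a reachable [v], follow the 0-choices.  Splicing them after a choice
   sequence that leads to [v] gives a full choice sequence, so by validity this
   0-path halts with catalytic tape [tau], i.e. at [acc_tau] or [rej_tau]; and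
   every configuration on it lies in the 0-component of [v]. *)

Section Runs.

Variables (c s : nat) (M : machine c s) (x : seq bool).

Lemma eq_run v (f g : nat -> bool) n :
  (forall i, i < n -> f i = g i) -> run M x v f n = run M x v g n.
Proof.
elim: n => [//|n IHn] eq_fg /=.
by rewrite IHn => [|i lt_in]; rewrite ?eq_fg // ltnW.
Qed.

Lemma runD v f n k :
  run M x v f (n + k) = run M x (run M x v f n) (fun i => f (n + i)) k.
Proof. by elim: k => [|k IHk] /=; rewrite ?addn0 // addnS /= IHk. Qed.

Lemma run_halting v f k : halting v -> run M x v f k = v.
Proof. by move=> hv; elim: k => [//|k IHk] /=; rewrite IHk hv. Qed.

Lemma run_halted v f n m :
  halting (run M x v f n) -> n <= m -> run M x v f m = run M x v f n.
Proof. by move=> hn /subnKC <-; rewrite runD run_halting. Qed.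

Lemma run_zeros_after v f n k :
  run M x v (fun i => if i < n then f i else false) (n + k) =
  run M x (run M x v f n) (fun _ => false) k.
Proof.
rewrite runD.
have -> : run M x v (fun i => if i < n then f i else false) n = run M x v f n.
  by apply: eq_run => i ->.
by apply: eq_run => i _; rewrite ltnNge leq_addr.
Qed.

Lemma connect_graph0_run_zeros v k :
  connect (graph0 M x) v (run M x v (fun _ => false) k).
Proof.
elim: k => [|k IHk] /=; first exact: connect0.
case: ifP => // not_halting.
apply: connect_trans IHk (connect1 _).
by rewrite /graph0 /edge0 not_halting eqxx.
Qed.

Lemma connect_sym_graph0 : connect_sym (graph0 M x).
Proof. by apply: sym_connect_sym => v w; rewrite /graph0 orbC. Qed.

Lemma reachable_run_zeros_halts tau v :
  valid M -> reachable M x tau v ->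
  exists k, halting (run M x v (fun _ => false) k) /\
            (run M x v (fun _ => false) k).1 = tau.
Proof.
move=> validM [f [n <-]].
have [N [haltN tauN]] := validM x tau (fun i => if i < n then f i else false).
exists (N - n); rewrite -run_zeros_after (run_halted haltN) //.
by rewrite -leq_subLR.
Qed.

End Runs.

Lemma halting_ctape c s (tau : ctape c) (w : config c s) :
  halting w -> w.1 = tau -> w = acc_cfg s tau \/ w = rej_cfg s tau.
Proof. by case: w => pi u /orP[] /eqP /= -> ->; [left | right]. Qed.

Theorem lemma4p8 (c s : nat) (M : machine c s) (hM : valid M)
  (x : seq bool) (tau : ctape c) (v : config c s) :
  reachable M x tau v ->
  (v \in comp0 M x (acc_cfg s tau)) || (v \in comp0 M x (rej_cfg s tau)).
Proof.
move=> reach_v.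
have [k [halt_k tau_k]] := reachable_run_zeros_halts hM reach_v.
have v_to_end := connect_graph0_run_zeros M x v k.
rewrite !unfold_in !(connect_sym_graph0 M x _ v).
by case: (halting_ctape halt_k tau_k) => <-; rewrite v_to_end ?orbT.
Qed.
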